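(* Let $K$ be a number field. Given a finite set of closed points $\{\theta_i\}_{i\in I}$ of $\mathbb{A}^1_K$ with residue fields $K(\theta_i)$, and given for each $i\in I$ a Châtelet surface $\mathcal{S}_i$ defined over $K(\theta_i)$, there exists a Châtelet surface bundle over $\mathbb{A}^1$ defined over $K$ whose fiber at $\theta_i$ is isomorphic to $\mathcal{S}_i$ for every $i\in I$.
   Context: A Châtelet surface over a field $k$ (of characteristic $0$) is the smooth projective surface $\mathcal{S}$ associated with an affine surface $y^2-az^2=P(x)$ in $\mathbb{A}^3$, where $a\in k^*$ is a nonzero constant and $P(x)\in k[x]$ is a separable polynomial of degree $4$; the projective model is obtained by gluing the surface $Y^2-aZ^2=W^2P(x)$ in $(\mathbb{P}^1\setminus\{\infty\})\times\mathbb{P}^2$ with the surface $Y^2-aZ^2=W'^2P^*(x')$ in $(\mathbb{P}^1\setminus\{0\})\times\mathbb{P}^2$ via $x=1/x'$, $W=x'^2W'$, where $P^*(x')=x'^4P(1/x')$. A Châtelet surface bundle over $\mathbb{A}^1$ defined over $K$ is the family of such surfaces parameterised by $t$ given by $y^2-a_tz^2=P_t(x)$ (with the projective model in $\mathbb{A}^1\times\mathbb{P}^1\times\mathbb{P}^2$ obtained by replacing $a$ by $a_t$ and $P$ by $P_t$ in the gluing construction), where $a_t\in K[t]$ is nonzero and $P_t(x)\in K[t,x]$ has degree $4$ in $x$; its fiber at a closed point $\theta$ of $\mathbb{A}^1$ is the surface $y^2-a_\theta z^2=P_\theta(x)$ over the residue field $K(\theta)$. *)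

From HB Require Import structures.
From mathcomp Require Import all_boot all_order all_algebra all_field.
Set Implicit Arguments. Unset Strict Implicit. Unset Printing Implicit Defensive.
Import GRing.Theory.
Local Open Scope ring_scope.

(* A Chatelet surface over a field k is given by its data (a, P):
   the smooth projective model of y^2 - a z^2 = P(x), a in k^*,
   P separable of degree 4 (size 5). *)
Record chatelet_data (k : fieldType) := ChateletData {
  ch_a : k;
  ch_P : {poly k} }.

Definition is_chatelet (k : fieldType) (S : chatelet_data k) : Prop :=
  ch_a S != 0 /\ size (ch_P S) = 5%N /\ separable_poly (ch_P S).

(* A Chatelet surface bundle over A^1_K: a_t in K[t] nonzero,
   P_t in K[t][x] of degree 4 in x. *)
Definition is_chatelet_bundle (K : fieldType) (a : {poly K}) (P : {poly {poly K}}) : Prop :=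
  a != 0 /\ size P = 5%N.

(* A closed point theta of A^1_K is presented by a finite extension L of K
   generated by theta : L, so that L = K(theta) is its residue field. *)
Definition closed_point_gen (K : fieldType) (L : fieldExtType K) (th : L) : Prop :=
  (<<1%VS; th>>)%VS = fullv.

Definition ev_at (K : fieldType) (L : fieldExtType K) (th : L) (q : {poly K}) : L :=
  (map_poly (in_alg L) q).[th].

(* two presented closed points are the same point of A^1_K iff the kernels
   of K[t] -> K(theta) agree *)
Definition same_closed_point (K : fieldType) (L1 L2 : fieldExtType K)
  (th1 : L1) (th2 : L2) : Prop :=
  forall q : {poly K}, ev_at th1 q = 0 <-> ev_at th2 q = 0.

Definition bundle_fiber (K : fieldType) (L : fieldExtType K) (th : L)
  (a : {poly K}) (P : {poly {poly K}}) : chatelet_data L :=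
  ChateletData (ev_at th a) (map_poly (ev_at th) P).

Notation numberFieldType := (fieldExtType rat).

(* Evaluation at theta_i is a surjection K[t] -> K(theta_i), and the kernels of
   these maps are pairwise distinct maximal ideals.  Lagrange interpolation (the
   Chinese remainder theorem) therefore makes K[t] -> prod_i K(theta_i) onto, so
   a_t and each coefficient of P_t can be prescribed at all the theta_i at once.
   Nonvanishing of a_t and the degree of P_t are read off any single fiber. *)

From HB Require Import structures.
From mathcomp Require Import all_boot all_order all_algebra all_field.
From Stdlib Require Import Classical.
Local Open Scope ring_scope.
Import GRing.Theory.

Section EvalAtPoint.
Context {K : fieldType}.

HB.instance Definition _ (L : fieldExtType K) (th : L) :=
  GRing.RMorphism.copy (ev_at th) (horner_alg th).

Lemma ev_at_surj {L : fieldExtType K} {th : L} : closed_point_gen th ->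
  forall y : L, exists p, ev_at th p = y.
Proof.
move=> gen y; have : y \in <<1; th>>%VS by rewrite gen memvf.
by case/Fadjoin1_polyP => p ->; exists p.
Qed.

Lemma separating_poly {L L' : fieldExtType K} {th : L} {th' : L'} :
  closed_point_gen th -> closed_point_gen th' -> ~ same_closed_point th th' ->
  exists g, ev_at th g = 1 /\ ev_at th' g = 0.
Proof.
move=> gen gen' /not_all_ex_not[q not_iff].
have [q0|q_nz] := eqVneq (ev_at th q) 0; have [q'0|q'_nz] := eqVneq (ev_at th' q) 0.
- by case: not_iff.
- have [r rE] := ev_at_surj gen' (ev_at th' q)^-1.
  exists (1 - r * q).
  by rewrite !rmorphB !rmorphM !rmorph1 /= q0 mulr0 subr0 rE mulVf ?subrr.
- have [r rE] := ev_at_surj gen (ev_at th q)^-1.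
  by exists (r * q); rewrite !rmorphM /= rE mulVf // q'0 mulr0.
- by case: not_iff; split => /eqP; rewrite ?(negPf q_nz) ?(negPf q'_nz).
Qed.

End EvalAtPoint.

Section Interpolation.
Context {K : fieldType} {I : finType} {L : I -> fieldExtType K}.
Context {th : forall i, L i}.
Hypothesis gen : forall i, closed_point_gen (th i).
Hypothesis distinct : forall i j, i != j -> ~ same_closed_point (th i) (th j).

Lemma lagrange_basis i : exists e, forall j, ev_at (th j) e = (i == j)%:R.
Proof.
have sep j : exists h, j != i -> ev_at (th i) h = 1 /\ ev_at (th j) h = 0.
  have [->|ij] := eqVneq i j; first by exists 0.
  have [h hE] := separating_poly (gen i) (gen j) (distinct _ _ ij).
  by exists h.
have [g gE] := fin_all_exists sep.
exists (\prod_(j | j != i) g j) => k; rewrite rmorph_prod /=.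
have [<-|ik] := eqVneq i k.
  by rewrite big1 // => j /gE[].
by rewrite (bigD1 k) 1?eq_sym //= (proj2 (gE k _)) 1?eq_sym // mul0r.
Qed.

Lemma ev_at_interpolation (b : forall i, L i) :
  exists p, forall i, ev_at (th i) p = b i.
Proof.
have [e eE] := fin_all_exists lagrange_basis.
have [r rE] := fin_all_exists (fun i => ev_at_surj (gen i) (b i)).
exists (\sum_i r i * e i) => j; rewrite rmorph_sum (bigD1 j) //= big1.
  by rewrite rmorphM /= rE eE eqxx mulr1 addr0.
by move=> i ij; rewrite rmorphM /= eE (negPf ij) mulr0.
Qed.

Lemma map_poly_interpolation n (Q : forall i, {poly L i}) :
  (forall i, size (Q i) <= n)%N ->
  exists P : {poly {poly K}},
    (size P <= n)%N /\ forall i, map_poly (ev_at (th i)) P = Q i.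
Proof.
move=> szQ.
(* stated as a boolean predicate so that [xchoose] gives a coefficient for each k *)
have coef_ex k : exists p, [forall i, ev_at (th i) p == (Q i)`_k].
  have [p pE] := ev_at_interpolation (fun i => (Q i)`_k).
  by exists p; apply/forallP => i; rewrite pE.
exists (\poly_(k < n) xchoose (coef_ex k)); split; first exact: size_poly.
move=> i; apply/polyP => k; rewrite coef_map /= coef_poly.
have [kn|nk] := ltnP k n; first by have /forallP/(_ i)/eqP := xchooseP (coef_ex k).
by rewrite rmorph0 nth_default // (leq_trans (szQ i)).
Qed.

End Interpolation.

Theorem proposition3p3 (K : numberFieldType) (I : finType)
  (L : I -> fieldExtType K) (th : forall i, L i)
  (S : forall i, chatelet_data (L i)) :
  (forall i, closed_point_gen (th i)) ->
  (forall i j, i != j -> ~ same_closed_point (th i) (th j)) ->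
  (forall i, is_chatelet (S i)) ->
  exists (a : {poly K}) (P : {poly {poly K}}),
    is_chatelet_bundle a P /\
    forall i, bundle_fiber (th i) a P = S i.
Proof.
move=> gen distinct chatelet.
have [i0 _|I0] := pickP (@predT I); last first.
  exists 1, 'X^4; split => [|i]; last by have := I0 i.
  by split; rewrite ?oner_neq0 ?size_polyXn.
have [a aE] := ev_at_interpolation gen distinct (fun i => ch_a (S i)).
have [|P [szP PE]] := map_poly_interpolation gen distinct 5 (fun i => ch_P (S i)).
  by move=> i; have [_ [-> _]] := chatelet i.
exists a, P; split; last by move=> i; rewrite /bundle_fiber aE PE; case: (S i).
have [a0_nz [szP0 _]] := chatelet i0; split.
  by apply: contra_neq a0_nz; rewrite -(aE i0) => ->; rewrite rmorph0.
by apply/eqP; rewrite eqn_leq szP -szP0 -(PE i0) /map_poly size_poly.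
Qed.
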